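(* Let $E$ be a finite set and $V \subset \mathbb R^E$ a linear subspace with oriented matroid $M$. Let $\sim$ be the equivalence relation on triples $(F,G,T)$ ($T$ a tope of $M$, $F\subset G$ flats relatively acyclic in $T$) given by $(F,G,T)\sim(F',G',T')$ iff $(F,G)=(F',G')$ and $\pi_{G\setminus F}(T)=\pi_{G\setminus F}(T')$. Then the equivalence classes of $\sim$ are in bijection with the cells $Y_{FGT}^\circ$, where $F\subset G$ range over flats of $M$ and $T$ over topes of $(M/F)|_G$. If $[S,I,J]$ is the equivalence class (of the triple $(I,J,S)$) corresponding to $Y_{FGT}^\circ$, then $Y_{FGT}^\circ = {}_S\mathcal Y_{IJ}^\circ$. Explicitly, $Y_{FGT}^\circ = {}_S\mathcal Y_{IJ}^\circ$ if and only if $(F,G) = (I,J)$ and $\pi_{G\setminus F}(S) = \pi_{G\setminus F}(T)$.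
   Context: $\mathbb P^1_{\mathbb R}=\mathbb R\cup\{\infty\}$. The sign map $s:\mathbb R^E\to\{-,0,+\}^E$ records signs of coordinates; the covectors of $M$ are $\{s(v):v\in V\}$; for a signed set $X$, $X^-,X^0,X^+$ are coordinates with value $-,0,+$; $X\le Y$ means $X^+\subset Y^+$, $X^-\subset Y^-$; topes are maximal covectors; flats are the sets $X^0$. A flat is relatively acyclic in a tope $T$ if it equals $X^0$ for a covector $X\le T$. $\pi_A$ denotes restriction to coordinates in $A$. For a flat $F$, $M/F$ is the oriented matroid on $E$ whose covectors are the covectors $X$ of $M$ with $F\subset X^0$; for a flat $G\supset F$, $(M/F)|_G$ has covectors $\pi_G(X)$ for $X$ covectors of $M/F$; its topes are signed sets on $G$ with zero set $F$. $Y_V$ is the Zariski closure of $V$ in $(\mathbb P^1_{\mathbb R})^E$, and for such $F\subset G$, $T$: $Y_{FGT}^\circ := Y_V\cap(0^F\times\mathbb R_{>0}^{T^+}\times\mathbb R_{<0}^{T^-}\times\infty^{E\setminus G})$. ${}_S\mathcal Y_V$ is the analytic closure of $s^{-1}(S)\cap V$ in $(\mathbb P^1_{\mathbb R})^E$, and ${}_S\mathcal Y_{IJ}^\circ := {}_S\mathcal Y_V \cap (0^I\times\mathbb R_{>0}^{(J\setminus I)\cap S^+}\times\mathbb R_{<0}^{(J\setminus I)\cap S^-}\times\infty^{E\setminus J})$. *)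

From Stdlib Require List.
From HB Require Import structures.
From mathcomp Require Import all_boot all_order all_algebra.
From mathcomp Require Import boolp classical_sets reals.
Set Implicit Arguments. Unset Strict Implicit. Unset Printing Implicit Defensive.
Import Order.TTheory GRing.Theory Num.Theory.
Local Open Scope ring_scope.

Section Defs.
Variables (R : realType) (E : finType).

Definition is_subspace (V : set (E -> R)) : Prop :=
  V (fun _ => 0) /\
  (forall u v, V u -> V v -> V (fun e => u e + v e)) /\
  (forall (a : R) v, V v -> V (fun e => a * v e)).

(* ---------- signed sets (values in {-1,0,1} : int) ---------- *)
Definition sgnset := E -> int.

Definition posset (X : sgnset) : {set E} := [set e | 0 < X e].
Definition negset (X : sgnset) : {set E} := [set e | X e < 0].
Definition zeroset (X : sgnset) : {set E} := [set e | X e == 0].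

Definition sle (X Y : sgnset) : Prop :=
  posset X \subset posset Y /\ negset X \subset negset Y.

Definition covector (V : set (E -> R)) (X : sgnset) : Prop :=
  exists2 v, V v & forall e, X e = sgz (v e).

Definition tope (V : set (E -> R)) (T : sgnset) : Prop :=
  covector V T /\ forall Y, covector V Y -> sle T Y -> forall e, Y e = T e.

Definition flat (V : set (E -> R)) (F : {set E}) : Prop :=
  exists2 X, covector V X & zeroset X = F.

Definition rel_acyclic (V : set (E -> R)) (F : {set E}) (T : sgnset) : Prop :=
  exists X, [/\ covector V X, sle X T & zeroset X = F].

(* restriction pi_G, encoded as a signed set on E that is 0 outside G *)
Definition restr (G : {set E}) (X : sgnset) : sgnset :=
  fun e => if e \in G then X e else 0.

(* covectors of (M/F)|_G : pi_G(X) for covectors X of M with F \subset X^0 *)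
Definition minor_covector (V : set (E -> R)) (F G : {set E}) (X : sgnset) : Prop :=
  exists Y, [/\ covector V Y, F \subset zeroset Y & forall e, X e = restr G Y e].

Definition minor_tope (V : set (E -> R)) (F G : {set E}) (T : sgnset) : Prop :=
  minor_covector V F G T /\
  forall Y, minor_covector V F G Y -> sle T Y -> forall e, Y e = T e.

Definition adm_triple (V : set (E -> R)) (I J : {set E}) (S : sgnset) : Prop :=
  [/\ tope V S, I \subset J, rel_acyclic V I S & rel_acyclic V J S].

Definition triple_equiv (I J : {set E}) (S : sgnset)
                        (I' J' : {set E}) (S' : sgnset) : Prop :=
  [/\ I = I', J = J' & forall e, e \in J :\: I -> S e = S' e].

(* ---------- P^1_R = R \cup {oo}, encoded as option R (None = oo) ---------- *)
Definition P1 := option R.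

Definition homx (p : P1) : R := if p is Some a then a else 1.
Definition homy (p : P1) : R := if p is Some _ then 1 else 0.

(* polynomials in the variables x_e, y_e (e in E): lists of terms
   (coefficient, exponents (deg in x_e, deg in y_e)) *)
Definition mpol := seq (R * (E -> nat * nat)).

Definition peval (f : mpol) (p : E -> P1) : R :=
  \sum_(t <- f) t.1 * \prod_(e : E) (homx (p e) ^+ (t.2 e).1 * homy (p e) ^+ (t.2 e).2).

Definition multihom (f : mpol) : Prop :=
  exists d : E -> nat, forall t, List.In t f -> forall e, ((t.2 e).1 + (t.2 e).2)%N = d e.

Definition embed (v : E -> R) : E -> P1 := fun e => Some (v e).

(* Y_V : Zariski closure of V in (P^1_R)^E *)
Definition YV (V : set (E -> R)) : set (E -> P1) :=
  [set p | forall f, multihom f -> (forall v, V v -> peval f (embed v) = 0) ->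
                     peval f p = 0].

(* analytic (Euclidean) closure in (P^1_R)^E of a subset of R^E;
   basic neighbourhoods of oo in P^1 are {oo} \cup {|x| > M} *)
Definition aclosure (A : set (E -> R)) : set (E -> P1) :=
  [set p | forall eps : R, 0 < eps -> exists2 v, A v &
     forall e, match p e with
               | Some a => `|v e - a| < eps
               | None => eps^-1 < `|v e|
               end].

Definition cellY (V : set (E -> R)) (F G : {set E}) (T : sgnset) : set (E -> P1) :=
  [set p | YV V p /\ forall e,
     [/\ e \in F -> p e = Some 0,
         0 < T e -> exists2 x, 0 < x & p e = Some x,
         T e < 0 -> exists2 x, x < 0 & p e = Some x
       & e \notin G -> p e = None]].

Definition SYV (V : set (E -> R)) (S : sgnset) : set (E -> P1) :=
  aclosure [set v | V v /\ forall e, sgz (v e) = S e].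

Definition cellSY (V : set (E -> R)) (S : sgnset) (I J : {set E}) : set (E -> P1) :=
  [set p | SYV V S p /\ forall e,
     [/\ e \in I -> p e = Some 0,
         e \in J :\: I -> 0 < S e -> exists2 x, 0 < x & p e = Some x,
         e \in J :\: I -> S e < 0 -> exists2 x, x < 0 & p e = Some x
       & e \notin J -> p e = None]].

End Defs.

(* Both kinds of cells coincide with a sign cell: the points that are
   infinite exactly off [J] and agree on [J] with a vector of [V] vanishing on
   [I] and having the prescribed signs on [J :\: I]. A point of either closure
   that is finite on [J] agrees there with a vector of [V]: otherwise a linear
   form vanishing on [V] separates it, and such a form is a multihomogeneous
   polynomial vanishing on [Y_V] as well as a continuous function.
   Conversely, [v] sent to infinity off [J] along a vector of [V] whose zero set
   is exactly [J] is a limit of points of [V], and of the stratum [S] once [v]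
   is slightly perturbed towards a vector with signs [S]. A sign cell
   determines [I], [J] and the signs on [J :\: I]; and every tope of [(M/F)|_G]
   lifts to a tope of [M] in which [F] and [G] are relatively acyclic, by
   perturbing a vector with zero set [G]. *)

From HB Require Import structures.
From mathcomp Require Import all_boot all_order all_algebra.
From mathcomp Require Import boolp classical_sets reals.
From mathcomp Require Import lra zify.
Set Implicit Arguments. Unset Strict Implicit. Unset Printing Implicit Defensive.
Import Order.TTheory GRing.Theory Num.Theory.
Local Open Scope ring_scope.

Section SignPerturbation.
Variable R : realFieldType.

Lemma sgz_addr_small (a d : R) : `|d| < `|a| -> sgz (a + d) = sgz a.
Proof.
case: (ltrgt0P a) => [a_gt0|a_lt0|a0]; last by rewrite ltNge normr_ge0.
- by rewrite ltr_norml => /andP [? ?]; rewrite !gtr0_sgz //; lra.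
- by rewrite ltr_norml => /andP [? ?]; rewrite !ltr0_sgz //; lra.
Qed.

Lemma sgz_pointP (p : option R) (k : int) : `|k| = 1 ->
  ((0 < k -> exists2 x, 0 < x & p = Some x) /\ (k < 0 -> exists2 x, x < 0 & p = Some x))
  <-> exists2 a, p = Some a & sgz a = k.
Proof.
move=> k1; split; last by move=> [a -> <-]; split; rewrite ?sgz_gt0 ?sgz_lt0 => a0; exists a.
case: (ltrgt0P k) k1 => [_|_|] //.
- by move=> -> [/(_ isT) [x x0 ->] _]; exists x; rewrite ?gtr0_sgz.
- by move=> /eqP; rewrite eqr_oppLR => /eqP -> [_ /(_ isT) [x x0 ->]]; exists x; rewrite ?ltr0_sgz.
Qed.

Variable E : finType.

Lemma finite_norm_bound (h : E -> R) : exists2 M : R, 0 < M & forall e, `|h e| < M.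
Proof.
have sum_ge0 : 0 <= \sum_e `|h e| by apply: sumr_ge0 => e _.
exists (1 + \sum_e `|h e|) => [|e]; first by lra.
rewrite (bigD1 e) //=.
have : 0 <= \sum_(i | i != e) `|h i| by apply: sumr_ge0 => i _.
lra.
Qed.

Lemma sgz_perturb (u w : E -> R) : exists2 d : R, 0 < d & forall d', 0 < d' -> d' <= d ->
  forall e, sgz (u e + d' * w e) = if u e == 0 then sgz (w e) else sgz (u e).
Proof.
have [M M_gt0 HM] := finite_norm_bound (fun e => if u e == 0 then 0 else `|w e| / `|u e|).
exists M^-1; first by rewrite invr_gt0.
move=> d d_gt0 d_le e; case: eqP => [->|/eqP ue0].
  by rewrite add0r sgzM gtr0_sgz // mul1r.
apply: sgz_addr_small; rewrite normrM (gtr0_norm d_gt0).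
have ue_gt0 : 0 < `|u e| by rewrite normr_gt0.
have := HM e; rewrite (negbTE ue0) normf_div !normr_id ltr_pdivrMr // => wM.
have dM : d * M <= 1 by rewrite -(mulVf (lt0r_neq0 M_gt0)) ler_pM2r.
apply: (lt_le_trans (y := d * M * `|u e|)); first by rewrite -mulrA ltr_pM2l.
by rewrite ler_piMl // ltW.
Qed.

End SignPerturbation.

Section Subspaces.
Variables (R : realType) (E : finType).
Implicit Types (U : set (E -> R)) (u q : E -> R).

Definition row_of_fun u : 'rV[R]_#|E| := \row_i u (enum_val i).
Definition fun_of_row (r : 'rV[R]_#|E|) : E -> R := fun e => r 0 (enum_rank e).

Lemma row_of_funK : cancel row_of_fun fun_of_row.
Proof. by move=> u; apply: funext => e; rewrite /fun_of_row mxE enum_rankK. Qed.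

Lemma subspace_addZ U u w (d : R) : is_subspace U -> U u -> U w ->
  U (fun e => u e + d * w e).
Proof. by move=> [_ [UD UZ]] Uu Uw; apply: UD => //; apply: UZ. Qed.

Lemma subspace_submx U m (A : 'M[R]_(m, #|E|)) : is_subspace U ->
  (forall i, U (fun_of_row (row i A))) -> forall r, (r <= A)%MS -> U (fun_of_row r).
Proof.
move=> [U0 [UD UZ]] UA r /submxP [D ->]; rewrite mulmx_sum_row.
apply: (big_ind (fun r => U (fun_of_row r))).
- by rewrite (_ : fun_of_row 0 = fun=> 0) //; apply: funext => e; rewrite /fun_of_row mxE.
- by move=> x y Ux Uy; rewrite (_ : fun_of_row _ = fun e => fun_of_row x e + fun_of_row y e);
    [exact: UD | apply: funext => e; rewrite /fun_of_row mxE].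
- by move=> i _; rewrite (_ : fun_of_row _ = fun e => D 0 i * fun_of_row (row i A) e);
    [exact: UZ | apply: funext => e; rewrite /fun_of_row mxE].
Qed.

(* A row space of maximal rank inside [U] contains all of [U]. *)
Lemma subspace_rowspace U : is_subspace U ->
  exists A : 'M[R]_#|E|, forall u, U u <-> (row_of_fun u <= A)%MS.
Proof.
move=> HU.
pose inU (A : 'M[R]_#|E|) := forall i, U (fun_of_row (row i A)).
have inU0 : inU 0.
  move=> i; rewrite (_ : fun_of_row _ = fun=> 0); first by case: HU.
  by apply: funext => e; rewrite /fun_of_row !mxE.
have rank_ex : exists k, `[< exists2 A, inU A & \rank A = k >].
  by exists (\rank (0 : 'M[R]_#|E|)); apply/asboolP; exists 0.
have rank_ub k : `[< exists2 A, inU A & \rank A = k >] -> (k <= #|E|)%N.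
  by move=> /asboolP [A _ <-]; exact: rank_leq_col.
have [k /asboolP [A inUA rkA] maxk] := ex_maxnP rank_ex rank_ub.
exists A => u; split => [Uu|]; last first.
  by move=> /(subspace_submx HU inUA); rewrite row_of_funK.
apply: contrapT => /negP uA.
pose B := (A + row_of_fun u)%MS.
have inUB : inU B.
  move=> i; apply: (subspace_submx (A := col_mx A (row_of_fun u))) => //; last first.
    by rewrite -addsmxE row_sub.
  move=> j; rewrite -(splitK j); case: (split j) => j' /=; first by rewrite rowKu.
  by rewrite rowKd (_ : row j' _ = row_of_fun u) ?row_of_funK //; apply/rowP => c; rewrite !mxE.
have ltAB : (A < B)%MS.
  by rewrite ltmxE addsmxSl /=; apply: contra uA; apply: submx_trans (addsmxSr _ _).
have := maxk (\rank B) (asboolT (ex_intro2 _ _ B inUB erefl)).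
by have := rank_ltmx ltAB; rewrite rkA; lia.
Qed.

Lemma row_of_fun_mulmx n (C : 'M[R]_(#|E|, n)) u k :
  (row_of_fun u *m C) 0 k = \sum_e u e * C (enum_rank e) k.
Proof.
rewrite mxE (reindex enum_rank) /=; last exact: onW_bij (@enum_rank_bij E).
by apply: eq_bigr => e _; rewrite mxE enum_rankK.
Qed.

Lemma separating_form U q : is_subspace U -> ~ U q ->
  exists m : E -> R, (forall u, U u -> \sum_e m e * u e = 0) /\ \sum_e m e * q e != 0.
Proof.
move=> HU Uq; have [A UA] := subspace_rowspace HU.
have formE k u : \sum_e cokermx A (enum_rank e) k * u e = (row_of_fun u *m cokermx A) 0 k.
  by rewrite row_of_fun_mulmx; apply: eq_bigr => e _; rewrite mulrC.
have /existsP [k qk] : [exists k, (row_of_fun q *m cokermx A) 0 k != 0].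
  apply: contraT => /existsPn qA; case: Uq; apply/UA; rewrite submxE.
  by apply/eqP/rowP => k; rewrite [RHS]mxE; apply/eqP/negPn; exact: qA.
exists (fun e => cokermx A (enum_rank e) k); split; last by rewrite formE.
by move=> u /UA; rewrite submxE formE => /eqP ->; rewrite mxE.
Qed.

End Subspaces.

Section MultihomogeneousForms.
Variables (R : realType) (E : finType).
Implicit Types (f : mpol R E) (x y : E -> R).

Definition pevalh f x y : R :=
  \sum_(t <- f) t.1 * \prod_e (x e ^+ (t.2 e).1 * y e ^+ (t.2 e).2).

Lemma pevalE f (p : E -> P1 R) :
  peval f p = pevalh f (fun e => homx (p e)) (fun e => homy (p e)).
Proof. by []. Qed.

Lemma eq_bigr_In (T : Type) (s : seq T) (g h : T -> R) :
  (forall t, List.In t s -> g t = h t) -> \sum_(t <- s) g t = \sum_(t <- s) h t.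
Proof.
elim: s => [|a s IHs] Hs; first by rewrite !big_nil.
by rewrite !big_cons Hs /= ?IHs // => [t st|]; [apply: Hs; right | left].
Qed.

Lemma In_mem (T : eqType) (s : seq T) (z : T) : List.In z s -> z \in s.
Proof. by elim: s => //= a s IHs [->|/IHs zs]; rewrite inE ?eqxx ?zs ?orbT. Qed.

Lemma pevalh_scale f (d : E -> nat) (c x y x' y' : E -> R) :
  (forall t, List.In t f -> forall e, ((t.2 e).1 + (t.2 e).2)%N = d e) ->
  (forall e, x' e = c e * x e) -> (forall e, y' e = c e * y e) ->
  pevalh f x' y' = (\prod_e c e ^+ d e) * pevalh f x y.
Proof.
move=> Hd Hx Hy; rewrite /pevalh mulr_sumr; apply: eq_bigr_In => t ft.
rewrite mulrCA -big_split /=; congr (_ * _); apply: eq_bigr => e _.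
by rewrite Hx Hy !exprMn -(Hd t ft e) exprD mulrACA.
Qed.

(* [s |-> pevalh f (x0 + s x1) (y0 + s y1)] is a polynomial with infinitely many roots. *)
Lemma pevalh_line_eq0 f (x0 x1 y0 y1 : E -> R) :
  (forall s, 0 < s -> pevalh f (fun e => x0 e + s * x1 e) (fun e => y0 e + s * y1 e) = 0) ->
  pevalh f x0 y0 = 0.
Proof.
move=> line0; pose L (a b : R) : {poly R} := a%:P + 'X * b%:P.
pose Q := \sum_(t <- f)
  t.1%:P * \prod_e (L (x0 e) (x1 e) ^+ (t.2 e).1 * L (y0 e) (y1 e) ^+ (t.2 e).2).
have QE s : Q.[s] = pevalh f (fun e => x0 e + s * x1 e) (fun e => y0 e + s * y1 e).
  rewrite /Q horner_sum; apply: eq_bigr => t _; rewrite hornerM hornerC horner_prod.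
  congr (_ * _); apply: eq_bigr => e _.
  by rewrite hornerM !horner_exp !hornerD !hornerM hornerX !hornerC.
have Q0 : Q = 0.
  apply: (@roots_geq_poly_eq0 _ _ [seq i.+1%:R | i <- iota 0 (size Q)]).
  - by apply/allP => _ /mapP [i _ ->]; rewrite /root QE line0.
  - by rewrite map_inj_uniq ?iota_uniq // => i j /eqP; rewrite eqr_nat => /eqP [].
  - by rewrite size_map size_iota.
have := QE 0; rewrite Q0 horner0 => ->.
by congr pevalh; apply: funext => e; rewrite mul0r addr0.
Qed.

Definition linear_form (m : E -> R) (J : {set E}) : mpol R E :=
  [seq (m e, fun e' => if e' == e then (1, 0)%N else if e' \in J then (0, 1)%N else (0, 0)%N)
  | e <- enum J].

Lemma linear_form_multihom m J : multihom (linear_form m J).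
Proof.
exists (fun e' => if e' \in J then 1%N else 0%N) => _ /List.in_map_iff [e [<- eJ]] e' /=.
move: eJ => /In_mem; rewrite mem_enum.
by move=> eJ; case: eqP => [->|_]; [rewrite eJ | case: ifP].
Qed.

Lemma linear_form_eval m J (p : E -> P1 R) : {in ~: J, forall e, m e = 0} ->
  {in J, forall e, homy (p e) = 1} ->
  peval (linear_form m J) p = \sum_e m e * homx (p e).
Proof.
move=> mJ py; rewrite /peval big_map big_enum /= big_mkcond; apply: eq_bigr => e _.
case: ifP => [eJ|/negbT eJ]; last by rewrite mJ ?inE // mul0r.
congr (_ * _); rewrite (bigD1 e) //= eqxx expr1 expr0 mulr1 big1 ?mulr1 // => e' /negbTE ->.
by case: ifP => [/py ->|_]; rewrite ?expr0 ?expr1 ?mulr1.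
Qed.

End MultihomogeneousForms.

Section Closures.
Variables (R : realType) (E : finType) (V : set (E -> R)).
Hypothesis HV : is_subspace V.

Definition embed_on (J : {set E}) (v : E -> R) : E -> P1 R :=
  fun e => if e \in J then Some (v e) else None.

Lemma separating_form_on (J : {set E}) (q : E -> R) :
  ~ (exists2 v, V v & {in J, forall e, q e = v e}) ->
  exists m : E -> R, [/\ forall u, V u -> \sum_e m e * u e = 0,
    {in ~: J, forall e, m e = 0} & \sum_e m e * q e != 0].
Proof.
move=> nq; have [V0 [VD VZ]] := HV.
pose U u := exists2 v, V v & {in J, forall e, u e = v e}.
have HU : is_subspace U.
  split; first by exists (fun=> 0).
  split=> [u1 u2 [v1 V1 h1] [v2 V2 h2]|a u [v Vv h]].
  - by exists (fun e => v1 e + v2 e) => [|e eJ]; [exact: VD | rewrite h1 ?h2].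
  - by exists (fun e => a * v e) => [|e eJ]; [exact: VZ | rewrite h].
have [m [mU mq]] := separating_form HU nq.
exists m; split => // [u Vu|e]; first by apply: mU; exists u.
rewrite inE => eJ; pose ind e' : R := if e' == e then 1 else 0.
have Uind : U ind.
  by exists (fun=> 0) => // e' e'J; rewrite /ind; case: eqP => // ee'; rewrite -ee' e'J in eJ.
have := mU _ Uind; rewrite (bigD1 e) //= /ind eqxx mulr1 big1 ?addr0 // => e' /negbTE ->.
exact: mulr0.
Qed.

Lemma YV_restrict (J : {set E}) (p : E -> P1 R) : YV V p ->
  {in J, forall e, exists a, p e = Some a} -> exists2 v, V v & {in J, forall e, p e = Some (v e)}.
Proof.
move=> Yp pJ; pose q e := homx (p e).
have pq : {in J, forall e, p e = Some (q e)} by move=> e /pJ [a]; rewrite /q => ->.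
suff [v Vv qv] : exists2 v, V v & {in J, forall e, q e = v e}.
  by exists v => // e eJ; rewrite pq ?qv.
apply: contrapT => /separating_form_on [m [mV mJ mq]].
have : peval (linear_form m J) p = 0.
  apply: Yp => [|u Vu]; first exact: linear_form_multihom.
  by rewrite linear_form_eval // mV.
by rewrite linear_form_eval // => [/eqP|e /pq ->//]; rewrite (negbTE mq).
Qed.

Lemma aclosure_restrict (A : set (E -> R)) (J : {set E}) (p : E -> P1 R) :
  (A `<=` V)%classic -> aclosure A p ->
  {in J, forall e, exists a, p e = Some a} -> exists2 v, V v & {in J, forall e, p e = Some (v e)}.
Proof.
move=> AV Ap pJ; pose q e := homx (p e).
have pq : {in J, forall e, p e = Some (q e)} by move=> e /pJ [a]; rewrite /q => ->.
suff [v Vv qv] : exists2 v, V v & {in J, forall e, q e = v e}.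
  by exists v => // e eJ; rewrite pq ?qv.
apply: contrapT => /separating_form_on [m [mV mJ mq]].
set c := \sum_e m e * q e in mq.
set N := \sum_e `|m e| + 1.
have N_gt0 : 0 < N by rewrite /N ltr_wpDl ?sumr_ge0.
have c_gt0 : 0 < `|c| by rewrite normr_gt0.
have [x Ax xp] := Ap _ (divr_gt0 c_gt0 N_gt0).
have cE : c = \sum_e m e * (q e - x e).
  by rewrite (eq_bigr _ (fun e _ => mulrBr _ _ _)) sumrB (mV x (AV x Ax)) subr0.
have c_le : `|c| <= (\sum_e `|m e|) * (`|c| / N).
  rewrite {1}cE mulr_suml; apply: (le_trans (ler_norm_sum _ _ _)); apply: ler_sum => e _.
  rewrite normrM; case: (boolP (e \in J)) => eJ; last by rewrite mJ ?inE // normr0 !mul0r.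
  apply: ler_wpM2l => //; have [a pa] := pJ e eJ.
  by have := xp e; rewrite /q pa /= distrC => /ltW.
have : (\sum_e `|m e|) * (`|c| / N) < `|c|.
  rewrite -[ltRHS](divfK (lt0r_neq0 N_gt0)) mulrC ltr_pM2l ?divr_gt0 //.
  by rewrite /N ltrDl.
by rewrite ltNge c_le.
Qed.

(* [embed_on J v] is the limit of [v + t g] as [t] tends to [+oo]. *)
Lemma YV_embed_on (J : {set E}) (g v : E -> R) : V g -> (forall e, (g e == 0) = (e \in J)) ->
  V v -> YV V (embed_on J v).
Proof.
move=> Vg gJ Vv f [d fd] fV.
pose x0 e := if e \in J then v e else g e.
pose y0 e : R := if e \in J then 1 else 0.
pose x1 e := if e \in J then 0 else v e.
pose y1 e : R := if e \in J then 0 else 1.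
have line s : 0 < s -> pevalh f (fun e => x0 e + s * x1 e) (fun e => y0 e + s * y1 e) = 0.
  move=> s_gt0; pose c e := if e \in J then 1 else s^-1.
  have c_neq0 : \prod_e c e ^+ d e != 0.
    by apply/prodf_neq0 => e _; rewrite expf_neq0 // /c; case: ifP; rewrite ?invr_eq0 gt_eqF.
  have := fV _ (subspace_addZ s^-1 HV Vv Vg).
  rewrite pevalE (pevalh_scale (c := c) (x := fun e => x0 e + s * x1 e)
    (y := fun e => y0 e + s * y1 e) fd).
  - by move/eqP; rewrite mulf_eq0 (negbTE c_neq0) => /eqP.
  - move=> e; rewrite /c /x0 /x1 /=; case: ifP => eJ.
      by move: (gJ e); rewrite eJ => /eqP ->; rewrite !mulr0 !addr0 mul1r.
    by rewrite [RHS]mulrDr mulrA mulVf ?gt_eqF // mul1r addrC.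
  - move=> e; rewrite /c /y0 /y1 /=; case: ifP => _; first by rewrite mulr0 addr0 mul1r.
    by rewrite add0r mulr1 mulVf ?gt_eqF.
have := pevalh_line_eq0 line.
rewrite (pevalh_scale (c := fun e => if e \in J then 1 else g e)
  (x := fun e => homx (embed_on J v e)) (y := fun e => homy (embed_on J v e)) fd) -?pevalE; last 2 first.
- by move=> e; rewrite /x0 /embed_on; case: ifP; rewrite ?mul1r ?mulr1.
- by move=> e; rewrite /y0 /embed_on; case: ifP; rewrite ?mul1r ?mulr0.
move/eqP; rewrite mulf_eq0 => /orP [/prodf_eq0 [e _]|/eqP //].
by rewrite expf_eq0 => /andP [_]; case: ifP => eJ; rewrite ?oner_eq0 ?gJ ?eJ.
Qed.

(* Approximate [v] on [J] by [y] with the signs [S], then push the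
   coordinates outside [J] to infinity along [b]. *)
Lemma SYV_embed_on (S : sgnset E) (J : {set E}) (s0 b v : E -> R) :
  V s0 -> (forall e, sgz (s0 e) = S e) ->
  V b -> (forall e, (b e == 0) = (e \in J)) -> (forall e, b e != 0 -> sgz (b e) = S e) ->
  V v -> {in J, forall e, v e != 0 -> sgz (v e) = S e} -> SYV V S (embed_on J v).
Proof.
move=> Vs0 s0S Vb bJ bS Vv vS eps eps_gt0.
have [d d_gt0 dsgz] := sgz_perturb v s0.
have [K K_gt0 s0K] := finite_norm_bound s0.
pose mu := Num.min d (eps / K).
have mu_gt0 : 0 < mu by rewrite lt_min d_gt0 divr_gt0.
pose y e := v e + mu * s0 e.
have Vy : V y by apply: subspace_addZ.
have yS : {in J, forall e, sgz (y e) = S e}.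
  move=> e eJ; rewrite /y dsgz ?ge_min ?lexx //.
  by case: eqP => [_|/eqP]; [exact: s0S | exact: vS].
have yv e : `|y e - v e| < eps.
  rewrite /y addrC addKr normrM gtr0_norm //.
  apply: (le_lt_trans (y := eps / K * `|s0 e|)); first by rewrite ler_wpM2r // ge_min lexx orbT.
  by rewrite mulrAC ltr_pdivrMr // ltr_pM2l.
have epsV_gt0 : 0 < eps^-1 by rewrite invr_gt0.
have [M M_gt0 bM] := finite_norm_bound (fun e => (`|y e| + eps^-1) / b e).
have yMb e : e \notin J -> `|y e| + eps^-1 < `|M * b e|.
  move=> eJ; have b_gt0 : 0 < `|b e| by rewrite normr_gt0 bJ.
  have num_ge0 : 0 <= `|y e| + eps^-1 by rewrite addr_ge0 // ltW.
  have := bM e; rewrite normf_div (ger0_norm num_ge0).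
  by rewrite ltr_pdivrMr // normrM (gtr0_norm M_gt0).
exists (fun e => y e + M * b e); first split.
- exact: subspace_addZ.
- move=> e; case: (boolP (e \in J)) => eJ.
    by move: (bJ e); rewrite eJ => /eqP ->; rewrite mulr0 addr0 yS.
  have bn : b e != 0 by rewrite bJ.
  rewrite addrC sgz_addr_small; first by rewrite sgzM gtr0_sgz ?mul1r ?bS.
  by have := yMb e eJ; have := epsV_gt0; lra.
- move=> e; rewrite /embed_on; case: ifP => eJ.
    by move: (bJ e); rewrite eJ => /eqP ->; rewrite mulr0 addr0; apply: yv.
  have := lerB_normD (M * b e) (y e); rewrite [M * b e + _]addrC.
  by have := yMb e (negbT eJ); lra.
Qed.

End Closures.

Section SignCells.
Variables (R : realType) (E : finType) (V : set (E -> R)).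
Implicit Types (I J : {set E}) (sg : sgnset E) (p : E -> P1 R).

Definition sign_pattern I J sg := I \subset J /\ {in J :\: I, forall e, `|sg e| = 1}.

Definition realizes I J sg (v : E -> R) :=
  [/\ V v, {in I, forall e, v e = 0} & {in J :\: I, forall e, sgz (v e) = sg e}].

Definition signcell I J sg : set (E -> P1 R) :=
  fun p => exists2 v, realizes I J sg v & p = embed_on J v.

Definition cell_coords I J sg p : Prop := forall e,
  [/\ e \in I -> p e = Some 0,
      e \in J :\: I -> 0 < sg e -> exists2 x, 0 < x & p e = Some x,
      e \in J :\: I -> sg e < 0 -> exists2 x, x < 0 & p e = Some x
    & e \notin J -> p e = None].

Lemma closure_cell (C : set (E -> P1 R)) I J sg : sign_pattern I J sg ->
  (forall p, C p -> {in J, forall e, exists a, p e = Some a} ->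
     exists2 v, V v & {in J, forall e, p e = Some (v e)}) ->
  (forall v, realizes I J sg v -> C (embed_on J v)) ->
  (fun p => C p /\ cell_coords I J sg p) = signcell I J sg.
Proof.
move=> [IJ sg1] Cfin Creal; apply: funext => p; apply: propext; split.
- move=> [Cp pc].
  have pJI e : e \in J :\: I -> exists2 a, p e = Some a & sgz a = sg e.
    move=> eJI; have [_ pP pN _] := pc e.
    by apply/(sgz_pointP _ (sg1 e eJI)); split; [apply: pP | apply: pN].
  have pJ : {in J, forall e, exists a, p e = Some a}.
    move=> e eJ; case: (boolP (e \in I)) => eI; first by exists 0; have [->] := pc e.
    have [a pa _] : exists2 a, p e = Some a & sgz a = sg e by apply: pJI; rewrite inE eI eJ.
    by exists a.
  have [v Vv pv] := Cfin p Cp pJ.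
  exists v; last first.
    apply: funext => e; rewrite /embed_on; case: ifP => [/pv //|/negbT eJ].
    by have [_ _ _ ->] := pc e.
  split => // e => [eI|eJI].
    by have [pI _ _ _] := pc e; move: (pv e (fintype.subsetP IJ e eI)); rewrite pI // => -[].
  by have [a] := pJI e eJI; have /setDP [/pv -> _] := eJI; move=> [<-].
- move=> [v [Vv vI vS] ->]; split; first exact: Creal.
  have vJI e : e \in J :\: I -> (0 < sg e -> exists2 x, 0 < x & embed_on J v e = Some x) /\
                                (sg e < 0 -> exists2 x, x < 0 & embed_on J v e = Some x).
    move=> eJI; have /setDP [eJ _] := eJI.
    by apply/(sgz_pointP _ (sg1 e eJI)); exists (v e); rewrite /embed_on ?eJ ?vS.
  move=> e; split => [eI|/vJI []//|/vJI []//|eJ]; rewrite /embed_on.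
    by rewrite (fintype.subsetP IJ e eI) vI ?eqxx.
  by rewrite (negbTE eJ).
Qed.

Lemma signcell_support I J sg p : sign_pattern I J sg -> signcell I J sg p ->
  [/\ J = [set e | p e != None], I = [set e | p e == Some 0]
    & {in J :\: I, forall e, sgz (homx (p e)) = sg e}].
Proof.
move=> [IJ sg1] [v [_ vI vS] ->]; split.
- by apply/setP => e; rewrite inE /embed_on; case: ifP.
- apply/setP => e; rewrite inE /embed_on; case: (boolP (e \in I)) => eI.
    by rewrite (fintype.subsetP IJ e eI) vI ?eqxx.
  case: ifP => // eJ; have eJI : e \in J :\: I by rewrite inE eI eJ.
  by apply/esym/negP => /eqP [v0]; move: (sg1 e eJI); rewrite -vS // v0 sgz0.
- by move=> e eJI; have /setDP [eJ _] := eJI; rewrite /embed_on eJ vS.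
Qed.

Lemma signcell_meet I J sg I' J' sg' p : sign_pattern I J sg -> sign_pattern I' J' sg' ->
  signcell I J sg p -> signcell I' J' sg' p ->
  [/\ I = I', J = J' & {in J :\: I, forall e, sg e = sg' e}].
Proof.
move=> pat pat' /(signcell_support pat) [-> -> sgp] /(signcell_support pat') [-> -> sgp'].
by split => // e eJI; rewrite -sgp // sgp'.
Qed.

Lemma signcell_inj I J sg I' J' sg' v : sign_pattern I J sg -> sign_pattern I' J' sg' ->
  realizes I J sg v -> signcell I J sg = signcell I' J' sg' ->
  [/\ I = I', J = J' & {in J :\: I, forall e, sg e = sg' e}].
Proof.
move=> pat pat' rv cellE; have pv : signcell I J sg (embed_on J v) := ex_intro2 _ _ v rv erefl.
have pv' : signcell I' J' sg' (embed_on J v) by rewrite -cellE.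
exact: signcell_meet pat pat' pv pv'.
Qed.

Lemma eq_signcell I J sg sg' : {in J :\: I, forall e, sg e = sg' e} ->
  signcell I J sg = signcell I J sg'.
Proof.
move=> sgE; apply: funext => p; apply: propext.
by split=> -[v [Vv vI vS] ->]; exists v => //; split => // e eJI; rewrite vS ?sgE.
Qed.

End SignCells.

Section SignVectors.
Variables (R : realType) (E : finType) (V : set (E -> R)).
Hypothesis HV : is_subspace V.
Implicit Types (F G I J : {set E}) (x y s : E -> R).

Lemma covector_sgz X : covector V X -> exists2 x, V x & X = (fun e => sgz (x e)).
Proof. by move=> [x Vx Xx]; exists x => //; apply: funext. Qed.

Lemma flat_sgz F : flat V F -> exists2 z, V z & forall e, (z e == 0) = (e \in F).
Proof. by move=> [X /covector_sgz [z Vz ->] <-]; exists z => // e; rewrite inE sgz_eq0. Qed.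

Lemma conformal_sle (X Y : sgnset E) : (forall e, X e != 0 -> Y e = X e) -> sle X Y.
Proof.
move=> XY; split; apply/fintype.subsetP => e; rewrite !inE => X0.
  by rewrite XY // (gt_eqF X0).
by rewrite XY // (lt_eqF X0).
Qed.

Lemma sle_sgz x y : sle (fun e => sgz (x e)) (fun e => sgz (y e)) ->
  forall e, x e != 0 -> sgz (y e) = sgz (x e).
Proof.
move=> [/fintype.subsetP pos /fintype.subsetP neg] e; case: (ltrgt0P (x e)) => // x0 _.
  by move: (pos e); rewrite !inE !sgz_gt0 => /(_ x0) y0; rewrite !gtr0_sgz.
by move: (neg e); rewrite !inE !sgz_lt0 => /(_ x0) y0; rewrite !ltr0_sgz.
Qed.

Lemma rel_acyclic_sgzP F s : rel_acyclic V F (fun e => sgz (s e)) <->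
  exists x, [/\ V x, forall e, (x e == 0) = (e \in F)
                 & forall e, x e != 0 -> sgz (s e) = sgz (x e)].
Proof.
split => [[X [/covector_sgz [x Vx ->] xs <-]]|[x [Vx xF xs]]].
  by exists x; split => // [e|]; [rewrite inE sgz_eq0 | exact: sle_sgz].
exists (fun e => sgz (x e)); split; first by exists x.
  by apply: conformal_sle => e; rewrite sgz_eq0 => /xs.
by apply/setP => e; rewrite inE sgz_eq0 xF.
Qed.

Lemma tope_sgz s : V s -> (forall e, s e = 0 -> forall v, V v -> v e = 0) ->
  tope V (fun e => sgz (s e)).
Proof.
move=> Vs sloop; split; first by exists s.
move=> _ /covector_sgz [y Vy ->] sy e; case: (eqVneq (s e) 0) => [s0|]; last exact: sle_sgz.
by rewrite s0 (sloop e s0 y Vy).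
Qed.

(* Induction on the coordinates: adding a small multiple of a vector that is
   nonzero at the next non-loop keeps the earlier non-loops nonzero. *)
Lemma exists_nonloop_vector : exists2 u, V u & forall e, u e = 0 -> forall v, V v -> v e = 0.
Proof.
suff [u Vu uloop] : exists2 u, V u & forall e, e \in enum E -> u e = 0 -> forall v, V v -> v e = 0.
  by exists u => // e; apply: uloop; rewrite mem_enum.
elim: (enum E) => [|e0 s [u Vu uloop]]; first by exists (fun=> 0) => //; case: HV.
have [[w Vw we0]|e0loop] := pselect (exists2 w, V w & w e0 != 0); last first.
  exists u => // e; rewrite inE => /orP [/eqP -> _ v Vv|/uloop //].
  by apply/eqP; apply: contrapT => /negP ?; apply: e0loop; exists v.
have [d d_gt0 dsgz] := sgz_perturb u w.
exists (fun e => u e + d * w e); first exact: subspace_addZ.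
move=> e es uw0; have : sgz (u e + d * w e) == 0 by rewrite uw0 sgz0.
rewrite dsgz //; case: (eqVneq (u e) 0) => [ue0|/negbTE un0]; rewrite sgz_eq0 ?un0 // => we.
move: es; rewrite inE => /orP [/eqP ee0|/uloop]; last exact.
by move: we0; rewrite -ee0 (eqP we) eqxx.
Qed.

Lemma minor_covector_sgz F G X : minor_covector V F G X ->
  exists y, [/\ V y, {in F, forall e, y e = 0} & forall e, X e = if e \in G then sgz (y e) else 0].
Proof.
move=> [_ [/covector_sgz [y Vy ->] /fintype.subsetP Fy XE]]; exists y; split => // e.
by move/Fy; rewrite inE sgz_eq0 => /eqP.
Qed.

(* A zero of [T] on [G :\: F] could be perturbed away, contradicting maximality. *)
Lemma minor_tope_neq0 F G T : flat V F -> minor_tope V F G T -> {in G :\: F, forall e, T e != 0}.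
Proof.
move=> /flat_sgz [z Vz zF] [/minor_covector_sgz [y [Vy yF TE]] Tmax] e0 /setDP [e0G e0F].
apply/negP => /eqP T0.
have y0 : y e0 = 0 by move: (TE e0); rewrite e0G T0 => /esym/eqP; rewrite sgz_eq0 => /eqP.
have [d d_gt0 dsgz] := sgz_perturb y z.
pose Y e := if e \in G then sgz (y e + d * z e) else 0.
have cY : minor_covector V F G Y.
  exists (fun e => sgz (y e + d * z e)); split => //.
    by exists (fun e => y e + d * z e) => //; exact: subspace_addZ.
  apply/fintype.subsetP => e eF; rewrite inE sgz_eq0 yF //.
  by move: (zF e); rewrite eF => /eqP ->; rewrite mulr0 addr0.
have TY : sle T Y.
  apply: conformal_sle => e; rewrite TE /Y; case: ifP => // _.
  by rewrite sgz_eq0 dsgz // => /negbTE ->.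
move: (Tmax Y cY TY e0); rewrite /Y e0G T0 dsgz // y0 eqxx => /eqP.
by rewrite sgz_eq0 zF (negbTE e0F).
Qed.

End SignVectors.

Section Cells.
Variables (R : realType) (E : finType) (V : set (E -> R)).
Hypothesis HV : is_subspace V.
Implicit Types (F G I J : {set E}) (S T : sgnset E).

Lemma adm_triple_pattern I J S : adm_triple V I J S ->
  sign_pattern I J S /\ exists v, realizes V I J S v.
Proof.
move=> [[/covector_sgz [s Vs ->] _] IJ /rel_acyclic_sgzP [x [Vx xI xs]] _].
have xJI e : e \in J :\: I -> x e != 0 by move=> /setDP [_]; rewrite xI.
split; first by split => // e /xJI x0; rewrite xs // normr_sgz x0.
exists x; split => // [e|e /xJI x0]; first by move: (xI e) => /[swap] -> /eqP.
by rewrite xs.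
Qed.

Lemma cellSY_signcell I J S : adm_triple V I J S -> cellSY V S I J = signcell V I J S.
Proof.
move=> A; have [pat _] := adm_triple_pattern A.
case: A pat => [[/covector_sgz [s Vs ->] _] _ _ /rel_acyclic_sgzP [b [Vb bJ bs]]] pat.
apply: (closure_cell (C := SYV V _) pat) => [p Sp|v [Vv vI vS]].
  by apply: aclosure_restrict Sp => // v [].
apply: (SYV_embed_on HV Vs _ Vb bJ _ Vv) => // [e b0|e eJ v0]; first by rewrite bs.
by rewrite vS // inE eJ andbT; apply: contra v0 => /vI ->.
Qed.

Lemma minor_tope_pattern F G T : flat V F -> F \subset G -> minor_tope V F G T ->
  sign_pattern F G T /\ exists v, realizes V F G T v.
Proof.
move=> fF FG tT; have [y [Vy yF TE]] := minor_covector_sgz tT.1.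
have TyGF e : e \in G :\: F -> T e = sgz (y e) by move=> /setDP [eG _]; rewrite TE eG.
split; last by exists y; split => // e /TyGF.
split => // e eGF; have := minor_tope_neq0 HV fF tT eGF.
by rewrite TyGF // normr_sgz sgz_eq0 => ->.
Qed.

Lemma cellY_signcell F G T : flat V F -> flat V G -> F \subset G -> minor_tope V F G T ->
  cellY V F G T = signcell V F G T.
Proof.
move=> fF /flat_sgz [g Vg gG] FG tT; have [pat _] := minor_tope_pattern fF FG tT.
have [y [Vy yF TE]] := minor_covector_sgz tT.1.
have T0 e : e \notin G :\: F -> T e = 0.
  by rewrite inE negb_and negbK TE => /orP [/yF ->|/negbTE ->]; rewrite ?sgz0 ?if_same.
rewrite -(closure_cell pat (C := YV V)) => [|p|v [Vv _ _]]; last 2 first.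
- exact: YV_restrict.
- exact: YV_embed_on Vg gG Vv.
(* [T] vanishes off [G :\: F], so a sign condition on [T e] forces [e \in G :\: F]. *)
apply: funext => p; apply: propext; split=> -[Yp pc]; split=> // e; have [pF pP pN pG] := pc e.
  by split.
split=> // [T_gt0|T_lt0]; [apply: pP | apply: pN] => //; apply: contraT => /T0 T0e.
  by rewrite T0e ltxx in T_gt0.
by rewrite T0e ltxx in T_lt0.
Qed.

(* The tope is [sgz (g + d1 y + d2 u)]: [g] cuts out [G], [y] realizes [T]
   and [u] has no zeros besides the loops. *)
Lemma minor_tope_lift F G T : flat V F -> flat V G -> F \subset G -> minor_tope V F G T ->
  exists S, adm_triple V F G S /\ {in G :\: F, forall e, S e = T e}.
Proof.
move=> fF /flat_sgz [g Vg gG] FG tT.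
have [y [Vy yF TE]] := minor_covector_sgz tT.1.
have [d1 d1_gt0 /(_ d1 d1_gt0 (lexx d1)) s1E] := sgz_perturb g y.
pose s1 e := g e + d1 * y e.
have [u Vu uloop] := exists_nonloop_vector HV.
have [d2 d2_gt0 /(_ d2 d2_gt0 (lexx d2)) sE] := sgz_perturb s1 u.
pose s e := s1 e + d2 * u e.
have s1F e : (s1 e == 0) = (e \in F).
  rewrite -sgz_eq0 s1E gG; case: ifP => eG; rewrite sgz_eq0.
    case: (boolP (e \in F)) => eF; first by rewrite yF ?eqxx.
    have : T e != 0 by apply: (minor_tope_neq0 HV fF tT); rewrite inE eF eG.
    by rewrite TE eG sgz_eq0 => /negbTE.
  by rewrite gG eG; apply/esym/negbTE; apply: contraFN eG => /(fintype.subsetP FG).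
have s1s e : s1 e != 0 -> sgz (s e) = sgz (s1 e) by move=> /negbTE s10; rewrite sE s10.
exists (fun e => sgz (s e)); split; last first.
  by move=> e /setDP [eG eF]; rewrite s1s ?s1F // s1E gG eG TE eG.
split => //.
- apply: tope_sgz => [|e s0]; first by do 2 apply: subspace_addZ => //.
  move: (sE e); rewrite -/(s e) s0 sgz0; case: eqP => [_ /esym/eqP|/eqP s10 /esym/eqP].
    by rewrite sgz_eq0 => /eqP; apply: uloop.
  by rewrite sgz_eq0 (negbTE s10).
- by apply/rel_acyclic_sgzP; exists s1; split => //; apply: subspace_addZ.
- apply/rel_acyclic_sgzP; exists g; split => // e g0.
  have s10 : s1 e != 0 by rewrite -sgz_eq0 s1E (negbTE g0) sgz_eq0.
  by rewrite s1s // s1E (negbTE g0).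
Qed.

End Cells.

Theorem lemma5p4 (R : realType) (E : finType) (V : set (E -> R)) :
  is_subspace V ->
  (* the cell attached to a triple depends only on its ~-class, and
     distinct classes give distinct cells *)
  (forall I J S I' J' S', adm_triple V I J S -> adm_triple V I' J' S' ->
     (cellSY V S I J = cellSY V S' I' J' <-> triple_equiv I J S I' J' S')) /\
  (* explicit description: Y_{FGT}^o = _S Y_{IJ}^o iff ... *)
  (forall (F G : {set E}) (T : E -> int),
     flat V F -> flat V G -> F \subset G -> minor_tope V F G T ->
     forall I J S, adm_triple V I J S ->
       (cellY V F G T = cellSY V S I J <->
        [/\ F = I, G = J & forall e, e \in G :\: F -> S e = T e])) /\
  (* every cell Y_{FGT}^o arises from some class *)
  (forall (F G : {set E}) (T : E -> int),
     flat V F -> flat V G -> F \subset G -> minor_tope V F G T ->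
     exists I J S, adm_triple V I J S /\ cellY V F G T = cellSY V S I J).
Proof.
move=> HV; split; [|split].
- move=> I J S I' J' S' A A'; rewrite !cellSY_signcell //.
  have [pat [v rv]] := adm_triple_pattern A; have [pat' _] := adm_triple_pattern A'.
  split => [/(signcell_inj pat pat' rv) //|[<- <- SS']].
  exact: eq_signcell.
- move=> F G T fF fG FG tT I J S A; rewrite cellY_signcell // cellSY_signcell //.
  have [pat [v rv]] := minor_tope_pattern HV fF FG tT; have [pat' _] := adm_triple_pattern A.
  split => [/(signcell_inj pat pat' rv) [-> -> TS]|[<- <- ST]].
    by split => // e eJI; rewrite TS.
  by apply: eq_signcell => e /ST.
- move=> F G T fF fG FG tT; have [S [A ST]] := minor_tope_lift HV fF fG FG tT.
  exists F, G, S; split => //; rewrite cellY_signcell // cellSY_signcell //.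
  by apply: eq_signcell => e /ST.
Qed.
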